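(* Let $\mathbb W$, $\mathbb W_i$ and $C$ be as in the context. An automorphism $\theta\in\operatorname{Aut}(\mathbb W)$ lies in $C$ if and only if $\theta(\mathbb W_i)=\mathbb W_i$ for every $2\le i\le n$.
   Context: Fix an integer $n\ge 3$, pairwise distinct odd integers $m_1,\dots,m_l\ge 3$ and positive integers $k_1,\dots,k_l$ with $k_1+\cdots+k_l=n-1$. Partition $\{2,\dots,n\}$ into consecutive blocks $A_1=\{2,\dots,k_1+1\}$, $A_2=\{k_1+2,\dots,k_1+k_2+1\}$, …, $A_l$ (of sizes $k_1,\dots,k_l$), and put $t_i=m_j$ for $i\in A_j$. The star group is $\mathbb W=\langle w_1,\dots,w_n\mid w_j^2=1\ (1\le j\le n),\ (w_1w_i)^{t_i}=1\ (2\le i\le n)\rangle$. For $2\le i\le n$ let $\mathbb W_i=\langle w_1,w_i\rangle$ (dihedral of order $2t_i$). For $2\le i\le n$ and $1\le k<t_i$ with $\gcd(k,t_i)=1$, $\theta_i^k$ is the automorphism of $\mathbb W$ with $\theta_i^k(w_j)=w_j$ for $j\ne i$ and $\theta_i^k(w_i)=w_1(w_1w_i)^k$. Let $C_i=\langle\theta_i^k : 1\le k<t_i,\ \gcd(k,t_i)=1\rangle\cong \operatorname{U}_{t_i}$ (the unit group of $\mathbb Z/t_i\mathbb Z$) and $C=C_2\times C_3\times\cdots\times C_n\le\operatorname{Aut}(\mathbb W)$, an abelian subgroup isomorphic to $\prod_{j=1}^l(\operatorname{U}_{m_j})^{k_j}$. *)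

(* The star Coxeter group W is modelled concretely
   by its presentation: elements are words over the generators, and equality
   in W is the congruence [eqW] generated by the defining relations.
   Letter a : 'I_n stands for the generator w_(a+1); so w_1 is the letter
   with value 0 and w_i (2 <= i <= n) is the letter with value i-1. *)
From mathcomp Require Import all_boot.
Set Implicit Arguments. Unset Strict Implicit. Unset Printing Implicit Defensive.

Section Star.
Variable n : nat.
Notation word := (seq 'I_n).

(* (t_2, ..., t_n) : block j consists of k_j copies of m_j *)
Definition tseq (ms ks : seq nat) : seq nat :=
  flatten [seq nseq p.2 p.1 | p <- zip ms ks].

(* t attached to the letter a (meaningful for val a >= 1, i.e. w_(a+1), a+1>=2) *)
Definition tlet (ts : seq nat) (a : 'I_n) : nat := nth 0 ts (val a).-1.

Inductive eqW (ts : seq nat) : word -> word -> Prop :=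
| eqW_refl s : eqW ts s s
| eqW_sym s u : eqW ts s u -> eqW ts u s
| eqW_trans s u v : eqW ts s u -> eqW ts u v -> eqW ts s v
| eqW_ctx x y s u : eqW ts s u -> eqW ts (x ++ s ++ y) (x ++ u ++ y)
| eqW_invol a : eqW ts [:: a; a] [::]
| eqW_braid b a : val b = 0 -> 0 < val a ->
    eqW ts (flatten (nseq (tlet ts a) [:: b; a])) [::].

Definition is_hom (ts : seq nat) (f : word -> word) : Prop :=
  (forall s u, eqW ts s u -> eqW ts (f s) (f u)) /\
  (forall s u, eqW ts (f (s ++ u)) (f s ++ f u)).

Definition is_aut (ts : seq nat) (f : word -> word) : Prop :=
  is_hom ts f /\
  exists g, is_hom ts g /\
    (forall s, eqW ts (g (f s)) s) /\ (forall s, eqW ts (f (g s)) s).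

(* the automorphism theta_i^k (a = letter of w_i, b = letter of w_1):
   w_i |-> w_1 (w_1 w_i)^k, other generators fixed *)
Definition theta (b a : 'I_n) (k : nat) (s : word) : word :=
  flatten [seq (if c == a then b :: flatten (nseq k [:: b; a]) else [:: c]) | c <- s].

(* C = subgroup of Aut(W) generated by all theta_i^k, 2<=i<=n, 1<=k<t_i,
   gcd(k,t_i)=1; automorphisms are identified up to eqW pointwise *)
Inductive inC (ts : seq nat) : (word -> word) -> Prop :=
| inC_id f : (forall s, eqW ts (f s) s) -> inC ts f
| inC_gen b a k f : val b = 0 -> 0 < val a -> 1 <= k < tlet ts a ->
    coprime k (tlet ts a) ->
    (forall s, eqW ts (f s) (theta b a k s)) -> inC ts f
| inC_comp f g h : inC ts f -> inC ts g ->
    (forall s, eqW ts (h s) (f (g s))) -> inC ts h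
| inC_inv f g : inC ts f -> is_hom ts g ->
    (forall s, eqW ts (g (f s)) s) -> inC ts g.

Definition inWi (ts : seq nat) (a : 'I_n) (s : word) : Prop :=
  exists u, all (fun c : 'I_n => (val c == 0) || (c == a)) u /\ eqW ts s u.

Definition stabilizes (ts : seq nat) (a : 'I_n) (f : word -> word) : Prop :=
  (forall s, inWi ts a s -> inWi ts a (f s)) /\
  (forall s, inWi ts a s -> exists u, inWi ts a u /\ eqW ts (f u) s).

End Star.

From mathcomp Require Import all_boot all_algebra zify ring.
Set Implicit Arguments. Unset Strict Implicit. Unset Printing Implicit Defensive.
Import GRing.Theory.

(* We first develop the
   dihedral subgroups W_i: every word in w_1, w_i is a rotation (w_1 w_i)^j or a
   reflection w_1 (w_1 w_i)^j, and a representation [rho] of W onto the dihedral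
   group D_(t_i) = Z/2 x| Z/t_i tells these elements apart.

   Easy inclusion: each generator theta_i^k is well defined on W and maps the
   generators of every W_c into W_c, with inverse theta_i^k' (k k' = 1 mod t_i);
   stabilizing every W_i is preserved by composition and inversion.

   Hard inclusion: let f stabilize every W_i.  Then f fixes w_1 (it lies in two
   different W_i, which meet in <w_1>), f(w_i) is a reflection w_1 (w_1 w_i)^k
   (a rotation of order dividing 2 is trivial since t_i is odd), and k is a unit
   mod t_i because f is onto W_i.  Composing the theta_i^k over all i gives an
   element of C that agrees with f on every generator, hence everywhere. *)

Section Words.
Variables (n : nat) (ts : seq nat).
Local Notation word := (seq 'I_n).
Local Notation E := (eqW ts).

Lemma eqW_cat (s s' u u' : word) : E s s' -> E u u' -> E (s ++ u) (s' ++ u').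
Proof.
move=> Hs Hu; apply: eqW_trans (_ : E (s' ++ u) _).
  by have := eqW_ctx [::] u Hs.
by have := eqW_ctx s' [::] Hu; rewrite !cats0.
Qed.

Lemma eqW_cons c (s s' : word) : E s s' -> E (c :: s) (c :: s').
Proof. exact: (@eqW_cat [:: c] [:: c]) (eqW_refl _ _). Qed.

(* Generators are involutions, so the reversed word is an inverse. *)
Lemma eqW_revK (x : word) : E (rev x ++ x) [::].
Proof.
elim: x => [|c x IH] /=; first exact: eqW_refl.
rewrite rev_cons -cats1 -catA; apply: eqW_trans IH.
exact: (eqW_ctx (rev x) x (eqW_invol ts c)).
Qed.

Lemma eqW_idem (x : word) : E x (x ++ x) -> E x [::].
Proof.
move=> Hx; apply: eqW_trans (eqW_revK x).
apply: eqW_trans (_ : E (rev x ++ (x ++ x)) _).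
  by rewrite catA; apply: eqW_sym; apply: eqW_cat (eqW_revK x) (eqW_refl _ _).
by apply: eqW_cat (eqW_refl _ _) (eqW_sym Hx).
Qed.

Lemma hom_nil (f : word -> word) : is_hom ts f -> E (f [::]) [::].
Proof. by case=> _ Hf; apply: eqW_idem; exact: Hf [::] [::]. Qed.

Lemma hom_cons (f : word -> word) c (s : word) :
  is_hom ts f -> E (f (c :: s)) (f [:: c] ++ f s).
Proof. by case=> _ Hf; exact: Hf [:: c] s. Qed.

(* [alt b a j] is the word (b a)^j; with b = w_1 and a = w_i these are the
   rotations of the dihedral group W_i. *)
Definition alt (b a : 'I_n) (j : nat) : word := flatten (nseq j [:: b; a]).

Lemma alt_add b a x y : alt b a (x + y) = alt b a x ++ alt b a y.
Proof. by rewrite /alt nseqD flatten_cat. Qed.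

Lemma alt_S b a j : alt b a j.+1 = [:: b, a & alt b a j].
Proof. by []. Qed.

Lemma rev_alt b a j : rev (alt b a j) = alt a b j.
Proof.
elim: j => [|j IH] //; rewrite -{1}addn1 alt_add rev_cat IH.
by rewrite [alt b a 1]/alt /= -/(alt a b j).
Qed.

Lemma alt_rcons b a j : alt b a j ++ [:: b] = b :: alt a b j.
Proof. by elim: j => [|j IH] //=; rewrite IH. Qed.

Lemma reflection_invol (b a : 'I_n) j :
  E ((b :: alt b a j) ++ (b :: alt b a j)) [::].
Proof.
have -> : (b :: alt b a j) ++ (b :: alt b a j) =
          [:: b] ++ [:: b] ++ rev (alt b a j) ++ alt b a j.
  by rewrite rev_alt cat_cons -(cat1s b (alt b a j)) catA alt_rcons.
apply: eqW_trans (_ : E ([::] ++ rev (alt b a j) ++ alt b a j) _).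
  by rewrite catA; exact: (eqW_ctx [::] _ (eqW_invol ts b)).
exact: eqW_revK.
Qed.

Definition Wi_letter (a c : 'I_n) : bool := (val c == 0) || (c == a).

Section Dihedral.
Variables b a : 'I_n.
Hypothesis hb : val b = 0.
Hypothesis ha : 0 < val a.
Local Notation T := (tlet ts a).

Lemma alt_mulT q : E (alt b a (q * T)) [::].
Proof.
elim: q => [|q IH]; first exact: eqW_refl.
by rewrite mulSn alt_add; apply: eqW_cat (eqW_braid _ hb ha) IH.
Qed.

Lemma alt_mod j : E (alt b a j) (alt b a (j %% T)).
Proof.
rewrite {1}(divn_eq j T) alt_add.
exact: eqW_cat (alt_mulT _) (eqW_refl _ _).
Qed.

Lemma alt_dvd j : T %| j -> E (alt b a j) [::].
Proof. by move=> /eqP Hj; apply: eqW_trans (alt_mod j) _; rewrite Hj; apply: eqW_refl. Qed.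

(* w_i w_1 = (w_1 w_i)^(-1), written as a positive power *)
Lemma ab_alt : 0 < T -> E [:: a; b] (alt b a T.-1).
Proof.
move=> hT; have Halt : alt b a T = alt b a T.-1 ++ [:: b; a].
  by rewrite -{1}(prednK hT) -addn1 alt_add.
apply: eqW_trans (_ : E (alt b a T ++ [:: a; b]) _).
  exact: eqW_cat (eqW_sym (eqW_braid _ hb ha)) (eqW_refl _ _).
rewrite Halt -catA -[X in E _ X]cats0; apply: eqW_cat (eqW_refl _ _) _.
apply: eqW_trans (eqW_invol ts b).
exact: (eqW_ctx [:: b] [:: b] (eqW_invol ts a)).
Qed.

Lemma Wi_normal_form (u : word) : 0 < T ->
  all (Wi_letter a) u ->
  (exists j, E u (alt b a j)) \/ (exists j, E u (b :: alt b a j)).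
Proof.
move=> hT; elim: u => [|c u IH] /=; first by left; exists 0; apply: eqW_refl.
have letter_b d : val d = 0 -> d = b by move=> hd; apply: val_inj; rewrite /= hd hb.
case/andP=> /orP[/eqP/letter_b ->| /eqP ->] /IH [[j Hj]|[j Hj]].
- by right; exists j; apply: eqW_cons.
- left; exists j; apply: eqW_trans (_ : E [:: b, b & alt b a j] _).
    exact: eqW_cons.
  exact: (eqW_ctx [::] _ (eqW_invol ts b)).
- right; exists j.+1; rewrite alt_S.
  apply: eqW_trans (_ : E [:: a & alt b a j] _); first exact: eqW_cons.
  exact: (eqW_ctx [::] _ (eqW_sym (eqW_invol ts b))).
- left; exists (T.-1 + j); rewrite alt_add.
  apply: eqW_trans (_ : E [:: a, b & alt b a j] _); first exact: eqW_cons.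
  exact: (@eqW_cat [:: a; b]) (ab_alt hT) (eqW_refl _ _).
Qed.

End Dihedral.

(* A representation of W onto the dihedral group D_(t_i), realised as pairs
   (reflection flag, rotation in Z/t_i): w_1 |-> (true, 0), w_i |-> (true, 1)
   and every other generator |-> (true, 0).  It detects non-trivial words of W_i. *)
Section DihedralRep.
Variables b a : 'I_n.
Hypothesis hb : val b = 0.
Hypothesis ha : 0 < val a.
Local Notation T := (tlet ts a).
Hypothesis hT : 1 < T.
Local Open Scope ring_scope.

Definition dmul (x y : bool * 'Z_T) : bool * 'Z_T :=
  (x.1 (+) y.1, (if y.1 then - x.2 else x.2) + y.2).

Lemma dmulA : associative dmul.
Proof.
case=> [x1 x2] [[|] y2] [[|] z2]; rewrite /dmul /= ?addbA;
  congr pair; try ring; by case: x1.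
Qed.

Lemma dmul1 x : dmul (false, 0) x = x.
Proof. by case: x => [[|] x2]; rewrite /dmul /= ?oppr0 add0r. Qed.

Definition rho (s : word) : bool * 'Z_T :=
  foldr (fun c acc => dmul (true, (c == a)%:R) acc) (false, 0) s.

Lemma rho_cat s u : rho (s ++ u) = dmul (rho s) (rho u).
Proof. by elim: s => [|c s IH] /=; rewrite ?dmul1 // IH dmulA. Qed.

Lemma rho_alt (b' c : 'I_n) j :
  rho (alt b' c j) = (false, j%:R * ((c == a)%:R - (b' == a)%:R)).
Proof.
elim: j => [|j IH]; first by rewrite mul0r.
by rewrite alt_S /= IH /dmul /=; congr pair; rewrite mulrSr; ring.
Qed.

Lemma rho_eqW s u : E s u -> rho s = rho u.
Proof.
elim=> // {s u}.
- by move=> s u v _ -> _ ->.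
- by move=> x y s u _ Hsu; rewrite !rho_cat Hsu.
- by move=> c; rewrite /= /dmul /= addr0 addNr.
move=> b' c hb' hc; rewrite -/(alt b' c _) rho_alt.
have -> : (b' == a) = false by apply/eqP => Hb; move: ha; rewrite -Hb hb'.
case: eqP => [->|_]; last by rewrite subrr mulr0.
by rewrite subr0 mulr1; congr pair; apply: val_inj; rewrite /= val_Zp_nat // modnn.
Qed.

Lemma ba_neq : (b == a) = false.
Proof. by apply/eqP => Hba; move: ha; rewrite -Hba hb. Qed.

Lemma rho_b : rho [:: b] = (true, 0).
Proof. by rewrite /rho /= ba_neq /dmul /= addr0. Qed.

Lemma rho_a : rho [:: a] = (true, 1).
Proof. by rewrite /rho /= eqxx /dmul /= addr0. Qed.

Lemma rho_rotation j : rho (alt b a j) = (false, j%:R).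
Proof. by rewrite rho_alt ba_neq eqxx subr0 mulr1. Qed.

Lemma rho_reflection j : rho (b :: alt b a j) = (true, j%:R).
Proof. by rewrite (rho_cat [:: b]) rho_b rho_rotation /dmul /= add0r. Qed.

Lemma rho_rotation_other c j : c != a -> rho (alt b c j) = (false, 0).
Proof. by move=> /negbTE Hc; rewrite rho_alt ba_neq Hc subrr mulr0. Qed.

Lemma rho_reflection_other c j : c != a -> rho (b :: alt b c j) = (true, 0).
Proof.
by move=> Hc; rewrite (rho_cat [:: b]) rho_b rho_rotation_other // /dmul /= addr0.
Qed.

Lemma Zp_nat_eq0 j : ((j%:R : 'Z_T) == 0) = (T %| j)%N.
Proof.
apply/eqP/idP => [/(congr1 val)|/eqP Hj]; first by rewrite /= val_Zp_nat // => /eqP.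
by apply: val_inj; rewrite /= val_Zp_nat.
Qed.

Lemma Zp_nat_eq1 j : (j%:R : 'Z_T) = 1 -> (j %% T = 1)%N.
Proof. by move/(congr1 val); rewrite /= val_Zp_nat. Qed.

Lemma rotation_trivial j : (j%:R : 'Z_T) = 0 -> E (alt b a j) [::].
Proof. by move=> /eqP; rewrite Zp_nat_eq0; exact: alt_dvd. Qed.

End DihedralRep.

Section Theta.
Variables b a : 'I_n.
Hypothesis hb : val b = 0.
Hypothesis ha : 0 < val a.
Variable k : nat.
Local Notation th := (theta b a k).

Lemma theta_cat (s u : word) : th (s ++ u) = th s ++ th u.
Proof. by rewrite /theta map_cat flatten_cat. Qed.

Lemma theta_letter c : th [:: c] = if c == a then b :: alt b a k else [:: c].
Proof. by rewrite /theta /= cats0. Qed.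

Lemma theta_cons c (s : word) : th (c :: s) = th [:: c] ++ th s.
Proof. by rewrite theta_letter. Qed.

Lemma theta_b (s : word) : th (b :: s) = b :: th s.
Proof. by rewrite theta_cons theta_letter (ba_neq hb ha). Qed.

Lemma theta_rotation j : E (th (alt b a j)) (alt b a (k * j)).
Proof.
elim: j => [|j IH]; first by rewrite muln0; apply: eqW_refl.
rewrite alt_S theta_b theta_cons theta_letter eqxx mulnS alt_add.
apply: eqW_trans (_ : E (b :: b :: alt b a k ++ alt b a (k * j)) _).
  by do 2 apply: eqW_cons; apply: eqW_cat (eqW_refl _ _) IH.
exact: (eqW_ctx [::] _ (eqW_invol ts b)).
Qed.

Lemma theta_eqW (s u : word) : E s u -> E (th s) (th u).
Proof.
elim=> {s u}.
- by move=> s; apply: eqW_refl.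
- by move=> s u _; apply: eqW_sym.
- by move=> s u v _ H1 _ H2; apply: eqW_trans H1 H2.
- move=> x y s u _ Hsu; rewrite !theta_cat.
  by apply: eqW_cat (eqW_refl _ _) (eqW_cat Hsu (eqW_refl _ _)).
- move=> c; rewrite theta_cons theta_letter.
  by case: eqP => _; [exact: reflection_invol | exact: eqW_invol].
move=> b' a' hb' ha'; have -> : b' = b by apply: val_inj; rewrite /= hb' hb.
case: (a' =P a) => [->|Ha'].
  exact: eqW_trans (theta_rotation _) (alt_mulT hb ha k).
suff -> : th (alt b a' (tlet ts a')) = alt b a' (tlet ts a') by exact: eqW_braid.
elim: (tlet ts a') => [|j IH] //.
by rewrite alt_S theta_b theta_cons theta_letter (introF eqP Ha') /= IH.
Qed.

Lemma theta_Wi_letters c (u : word) : all (Wi_letter c) u -> all (Wi_letter c) (th u).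
Proof.
elim: u => [|d u IH] //= /andP[Hd Hu]; rewrite theta_cons all_cat IH // andbT.
rewrite theta_letter; case: eqP => [Hda|]; last by rewrite /= Hd.
move: Hd; rewrite /Wi_letter Hda => /orP[/eqP Ha0|/eqP <-].
  by move: ha; rewrite Ha0.
rewrite /= (hb : nat_of_ord b = 0) /=.
by elim: k => [|j IHj] //=; rewrite IHj (hb : nat_of_ord b = 0) !eqxx ?orbT.
Qed.

End Theta.

Lemma theta_inv (b a : 'I_n) k k' (u : word) : val b = 0 -> 0 < val a ->
  (k * k') %% tlet ts a = 1 -> E (theta b a k (theta b a k' u)) u.
Proof.
move=> hb ha Hkk'; elim: u => [|c u IH]; first exact: eqW_refl.
rewrite theta_cons theta_cat -(cat1s c u); apply: eqW_cat _ IH.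
rewrite theta_letter; case: eqP => [->|Hca]; last first.
  by rewrite theta_letter (introF eqP Hca); apply: eqW_refl.
rewrite theta_b //; apply: eqW_trans (_ : E (b :: alt b a (k * k')) _).
  exact/eqW_cons/theta_rotation.
apply: eqW_trans (_ : E (b :: alt b a 1) _).
  by apply: eqW_cons; rewrite -Hkk'; exact: alt_mod.
exact: (eqW_ctx [::] [:: a] (eqW_invol ts b)).
Qed.

Lemma modn_inverse k T : 0 < k -> 1 < T -> coprime k T ->
  exists k', (k * k') %% T = 1.
Proof.
move=> k0 hT Hcop; have [[u1 u2] /= Hu] := coprimeP T k0 Hcop.
exists u1; have -> : k * u1 = 1 + u2 * T by lia.
by rewrite addnC modnMDl modn_small.
Qed.

Lemma inWi_eqW a (s s' : word) : inWi ts a s -> E s s' -> inWi ts a s'.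
Proof. by case=> u [Hu Hs] H; exists u; split => //; apply: eqW_trans (eqW_sym H) Hs. Qed.

Definition stabilizes_all (f : word -> word) : Prop :=
  (forall s u, E s u -> E (f s) (f u)) /\
  forall a : 'I_n, 0 < val a -> stabilizes ts a f.

Lemma theta_stabilizes_all b a k : val b = 0 -> 0 < val a -> 0 < k ->
  coprime k (tlet ts a) -> 1 < tlet ts a -> stabilizes_all (theta b a k).
Proof.
move=> hb ha k0 Hcop hT; split; first exact: theta_eqW.
have [k' Hkk'] := modn_inverse k0 hT Hcop.
move=> c hc; split=> s [u [Hu Hsu]].
  by exists (theta b a k u); split; [exact: theta_Wi_letters | exact: theta_eqW].
exists (theta b a k' u); split; first by exists (theta b a k' u); split;
  [exact: theta_Wi_letters | exact: eqW_refl].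
exact: eqW_trans (theta_inv u hb ha Hkk') (eqW_sym Hsu).
Qed.

Lemma inC_stabilizes_all f : inC ts f -> stabilizes_all f.
Proof.
elim=> {f}.
- move=> f Hf; split.
    by move=> s u H; apply: eqW_trans (Hf s) (eqW_trans H (eqW_sym (Hf u))).
  move=> a ha; split=> [s Hs|s Hs]; last by exists s.
  exact: inWi_eqW Hs (eqW_sym (Hf s)).
- move=> b a k f hb ha /andP[k0 kT] Hcop Hf.
  have [Rth Sth] := theta_stabilizes_all hb ha k0 Hcop (leq_ltn_trans k0 kT).
  split=> [s u H|c hc].
    by apply: eqW_trans (Hf s) (eqW_trans (Rth _ _ H) (eqW_sym (Hf u))).
  have [S1 S2] := Sth c hc; split=> [s Hs|s Hs].
    exact: inWi_eqW (S1 s Hs) (eqW_sym (Hf s)).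
  have [u [Hu Hthu]] := S2 s Hs; exists u; split=> //.
  exact: eqW_trans (Hf u) Hthu.
- move=> f g h _ [Rf Sf] _ [Rg Sg] Hh; split.
    move=> s u H; apply: eqW_trans (Hh s) _.
    exact: eqW_trans (Rf _ _ (Rg _ _ H)) (eqW_sym (Hh u)).
  move=> a ha; have [Sf1 Sf2] := Sf a ha; have [Sg1 Sg2] := Sg a ha; split.
    by move=> s Hs; apply: inWi_eqW (Sf1 _ (Sg1 _ Hs)) (eqW_sym (Hh s)).
  move=> s Hs; have [u [Hu Hfu]] := Sf2 s Hs; have [v [Hv Hgv]] := Sg2 u Hu.
  by exists v; split=> //; apply: eqW_trans (Hh v) (eqW_trans (Rf _ _ Hgv) Hfu).
- move=> f g _ [Rf Sf] [Rg _] Hgf; split=> // a ha.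
  have [Sf1 Sf2] := Sf a ha; split=> [s Hs|s Hs]; last first.
    by exists (f s); split; [exact: Sf1 | exact: Hgf].
  have [u [Hu Hfu]] := Sf2 s Hs.
  exact: inWi_eqW Hu (eqW_trans (eqW_sym (Hgf u)) (Rg _ _ Hfu)).
Qed.

End Words.

Section Letterwise.
Variables (n : nat) (ts : seq nat).
Local Notation word := (seq 'I_n).
Local Notation E := (eqW ts).

Definition letterwise (F : word -> word) : Prop :=
  forall s, F s = flatten [seq F [:: c] | c <- s].

Lemma letterwise_cat F (s u : word) : letterwise F -> F (s ++ u) = F s ++ F u.
Proof. by move=> HF; rewrite HF map_cat flatten_cat -!HF. Qed.

Lemma hom_eq_letterwise (f F : word -> word) : is_hom ts f -> letterwise F ->
  (forall c, E (f [:: c]) (F [:: c])) -> forall s, E (f s) (F s).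
Proof.
move=> Hf HF Hc; elim=> [|c s IH]; first by rewrite HF; exact: hom_nil.
change (E (f (c :: s)) (F ([:: c] ++ s))); rewrite letterwise_cat //.
apply: eqW_trans (hom_cons c s Hf) _.
exact: eqW_cat (Hc c) IH.
Qed.

Lemma letterwise_in_C (b0 : 'I_n) (img : 'I_n -> word) (l : seq 'I_n) :
  val b0 = 0 -> uniq l -> all (fun c : 'I_n => 0 < val c) l ->
  (forall c, c \in l -> exists k, [&& 0 < k, k < tlet ts c & coprime k (tlet ts c)] /\
     E (img c) (b0 :: alt b0 c k)) ->
  exists F, [/\ inC ts F, letterwise F,
    forall c, c \notin l -> F [:: c] = [:: c] &
    forall c, c \in l -> E (img c) (F [:: c])].
Proof.
move=> hb0; elim: l => [|c l IH] /=.
  move=> _ _ _; exists id; split=> //; first by apply: inC_id => s; apply: eqW_refl.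
  by elim=> //= c s <-.
move=> /andP[cl ul] /andP[hc al] Himg.
have [F [FC Flw Fout Fin]] := IH ul al (fun d dl => Himg d (mem_behead (s := c :: l) dl)).
have [k [/and3P[k0 kT kcop] Hk]] := Himg c (mem_head c l).
have Fid (w : word) : all (fun d => d \notin l) w -> F w = w.
  by rewrite Flw; elim: w => //= d w IHw /andP[/Fout -> /IHw ->].
have b0_notin : b0 \notin l by apply/negP => /(allP al); rewrite hb0.
exists (F \o theta b0 c k); split.
- apply: (inC_comp (f := F) (g := theta b0 c k)) => //; last by move=> s; apply: eqW_refl.
  apply: (inC_gen (b := b0) (a := c) (k := k)) => //; first by rewrite k0.
  by move=> s; apply: eqW_refl.
- by elim=> //= d s IHs; rewrite theta_cons letterwise_cat // IHs.
- move=> d; rewrite in_cons negb_or => /andP[/negbTE dc dl].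
  by rewrite /= theta_letter dc Fout.
move=> d; rewrite in_cons => /orP[/eqP ->|dl] /=; last first.
  have dc : (d == c) = false by apply/negbTE; apply: contraNneq cl => <-.
  by rewrite theta_letter dc; exact: Fin.
rewrite theta_letter eqxx Fid; first exact: Hk.
rewrite /= b0_notin /=; elim: (k) => //= j ->; rewrite b0_notin andbT.
by rewrite cl.
Qed.

End Letterwise.

Section StabilizingAutomorphism.
Variables (n : nat) (ts : seq nat).
Local Notation word := (seq 'I_n).
Local Notation E := (eqW ts).
Variable b0 : 'I_n.
Hypothesis hb0 : val b0 = 0.
Hypothesis ht_odd : forall a : 'I_n, 0 < val a -> odd (tlet ts a) && (2 < tlet ts a).
Variables f g : word -> word.
Hypothesis Hf : is_hom ts f.
Hypothesis Hg : is_hom ts g.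
Hypothesis Hgf : forall s, E (g (f s)) s.
Hypothesis Hstab : forall a : 'I_n, 0 < val a -> stabilizes ts a f.

Lemma tlet_gt1 (a : 'I_n) : 0 < val a -> 1 < tlet ts a.
Proof. by move=> /ht_odd /andP[_ /ltnW]. Qed.

Lemma f_eqW (s u : word) : E s u -> E (f s) (f u).
Proof. by case: Hf => Hresp _; exact: Hresp. Qed.

Lemma f_kernel_trivial (w : word) : E (f w) [::] -> E w [::].
Proof.
move=> Hw; apply: eqW_trans (eqW_sym (Hgf w)) (eqW_trans _ (hom_nil Hg)).
by case: Hg => Hresp _; exact: Hresp.
Qed.

Lemma inWi_letter (a c : 'I_n) : val c = 0 \/ c = a -> inWi ts a [:: c].
Proof.
move=> Hc; exists [:: c]; split; last exact: eqW_refl.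
by rewrite /= andbT /Wi_letter; case: Hc => ->; rewrite eqxx ?orbT.
Qed.

Lemma image_normal_form (a : 'I_n) (w : word) : 0 < val a -> inWi ts a w ->
  (exists j, E (f w) (alt b0 a j)) \/ (exists j, E (f w) (b0 :: alt b0 a j)).
Proof.
move=> ha Hw; have [u [Hu Hfu]] := (Hstab ha).1 w Hw.
have [[j Hj]|[j Hj]] := Wi_normal_form hb0 ha (ltnW (tlet_gt1 ha)) Hu.
  by left; exists j; apply: eqW_trans Hfu Hj.
by right; exists j; apply: eqW_trans Hfu Hj.
Qed.

(* f fixes w_1: f(w_1) lies in W_(a1) and W_(a2), whose intersection is <w_1>,
   and f(w_1) is not trivial. *)
Lemma fix_w1 (a1 a2 : 'I_n) : 0 < val a1 -> 0 < val a2 -> a2 != a1 ->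
  E (f [:: b0]) [:: b0].
Proof.
move=> ha1 ha2 hne; have hT := tlet_gt1 ha1.
have Hrot : (rho ts a1 (f [:: b0])).2 = 0%R.
  have [[j Hj]|[j Hj]] := image_normal_form ha2 (inWi_letter (or_introl hb0));
  by rewrite (rho_eqW ha1 hT Hj) ?rho_rotation_other ?rho_reflection_other.
have [[j Hj]|[j Hj]] := image_normal_form ha1 (inWi_letter (or_introl hb0));
  rewrite (rho_eqW ha1 hT Hj) ?rho_rotation ?rho_reflection // in Hrot.
  have Hb0 := f_kernel_trivial (eqW_trans Hj (rotation_trivial hb0 ha1 hT Hrot)).
  by have := rho_eqW ha1 hT Hb0; rewrite rho_b.
exact: eqW_trans Hj (eqW_cons _ (rotation_trivial hb0 ha1 hT Hrot)).
Qed.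

(* f(w_i) is a reflection of W_i: a rotation (b0 a)^j with f(w_i)^2 = 1
   would have t_i | 2j, hence t_i | j as t_i is odd, so f(w_i) = 1. *)
Lemma image_is_reflection (a : 'I_n) : 0 < val a ->
  exists j, E (f [:: a]) (b0 :: alt b0 a j).
Proof.
move=> ha; have hT := tlet_gt1 ha.
have [[j Hj]|//] := image_normal_form ha (inWi_letter (or_intror erefl)).
have Hjj : E (alt b0 a (j + j)) [::].
  rewrite alt_add; apply: eqW_trans (eqW_cat (eqW_sym Hj) (eqW_sym Hj)) _.
  apply: eqW_trans (eqW_sym (Hf.2 [:: a] [:: a])) (eqW_trans _ (hom_nil Hf)).
  exact/f_eqW/eqW_invol.
have /eqP := rho_eqW ha hT Hjj; rewrite rho_rotation // xpair_eqE /= Zp_nat_eq0 //.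
rewrite addnn -muln2 Gauss_dvdl ?coprimen2; last by case/andP: (ht_odd ha).
move=> /(alt_dvd hb0 ha) Hj0; have Ha := f_kernel_trivial (eqW_trans Hj Hj0).
by have := rho_eqW ha hT Ha; rewrite rho_a.
Qed.

Section FixedW1.
Hypothesis Hfb : E (f [:: b0]) [:: b0].

Lemma image_rotation (a : 'I_n) k : E (f [:: a]) (b0 :: alt b0 a k) ->
  forall m, E (f (alt b0 a m)) (alt b0 a (k * m)).
Proof.
move=> Hk; elim=> [|m IH]; first by rewrite muln0; exact: hom_nil Hf.
rewrite alt_S mulnS alt_add; apply: eqW_trans (hom_cons _ _ Hf) _.
apply: eqW_trans (_ : E ([:: b0] ++ ((b0 :: alt b0 a k) ++ alt b0 a (k * m))) _).
  by apply: eqW_cat Hfb _; apply: eqW_trans (hom_cons _ _ Hf) (eqW_cat Hk IH).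
exact: (eqW_ctx [::] _ (eqW_invol ts b0)).
Qed.

(* Surjectivity of f on W_i forces the exponent of f(w_i) to be a unit. *)
Lemma image_unit_exponent (a : 'I_n) : 0 < val a -> exists k,
  [&& 0 < k, k < tlet ts a & coprime k (tlet ts a)] /\ E (f [:: a]) (b0 :: alt b0 a k).
Proof.
move=> ha; have hT := tlet_gt1 ha.
have [j Hj] := image_is_reflection ha.
set k := j %% tlet ts a.
have Hk : E (f [:: a]) (b0 :: alt b0 a k).
  exact: eqW_trans Hj (eqW_cons _ (alt_mod ts hb0 ha j)).
exists k; split=> //.
have [u [[v [Hv Huv]] Hfu]] := (Hstab ha).2 _ (inWi_letter (or_intror erefl)).
have Hfv : E (f v) [:: a] by exact: eqW_trans (f_eqW (eqW_sym Huv)) Hfu.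
have [[m Hm]|[m Hm]] := Wi_normal_form hb0 ha (ltnW hT) Hv.
  have Hfm := eqW_trans (f_eqW Hm) (image_rotation Hk m).
  by have := rho_eqW ha hT (eqW_trans (eqW_sym Hfv) Hfm); rewrite rho_a rho_rotation.
have Hfm : E (f (b0 :: alt b0 a m)) (b0 :: alt b0 a (k * m)).
  exact: eqW_trans (hom_cons _ _ Hf) (eqW_cat Hfb (image_rotation Hk m)).
have := rho_eqW ha hT (eqW_trans (eqW_sym Hfv) (eqW_trans (f_eqW Hm) Hfm)).
rewrite rho_a rho_reflection // => -[] /esym /(Zp_nat_eq1 hT) Hkm.
have k0 : 0 < k by rewrite lt0n; apply/eqP => Hk0; move: Hkm; rewrite Hk0 mul0n mod0n.
by rewrite k0 ltn_pmod ?(ltnW hT) //=; apply: modn_coprime k0 _; exists m.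
Qed.

End FixedW1.

(* The hard inclusion: f agrees on every generator with an element of C. *)
Lemma stabilizing_in_C : 2 < n -> inC ts f.
Proof.
move=> hn; pose a1 : 'I_n := Ordinal (ltnW hn); pose a2 : 'I_n := Ordinal hn.
have Hfb : E (f [:: b0]) [:: b0] by exact: (@fix_w1 a1 a2).
pose l := [seq c <- enum 'I_n | 0 < val c].
have [|||F [FC Flw Fout Fin]] := @letterwise_in_C _ ts b0 (fun c => f [:: c]) l hb0.
- exact/filter_uniq/enum_uniq.
- exact: filter_all.
- by move=> c; rewrite mem_filter => /andP[hc _]; exact: image_unit_exponent.
apply: (inC_comp FC (inC_id (fun s => eqW_refl ts s))) => s /=.
apply: hom_eq_letterwise Hf Flw _ s => c; case: (posnP (val c)) => hc.
  have -> : c = b0 by apply: val_inj; rewrite /= hc hb0.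
  by rewrite Fout // mem_filter hb0.
by apply: Fin; rewrite mem_filter hc mem_enum.
Qed.
End StabilizingAutomorphism.

Lemma mem_tseq (ms ks : seq nat) x : x \in tseq ms ks -> x \in ms.
Proof.
elim: ms ks => [|m ms IH] [|k ks] //=.
rewrite /tseq /= mem_cat => /orP[/nseqP[-> _]|Hx]; first exact: mem_head.
by rewrite in_cons (IH ks Hx) orbT.
Qed.

Lemma size_tseq (ms ks : seq nat) : size ms = size ks -> size (tseq ms ks) = sumn ks.
Proof.
elim: ms ks => [|m ms IH] [|k ks] //= [] Hsz.
by rewrite /tseq /= size_cat size_nseq -(IH _ Hsz).
Qed.

Lemma tlet_odd_ge3 (n : nat) (ms ks : seq nat) :
  size ms = size ks -> all (fun m => odd m && (3 <= m)) ms -> sumn ks = n - 1 ->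
  forall a : 'I_n, 0 < val a -> odd (tlet (tseq ms ks) a) && (2 < tlet (tseq ms ks) a).
Proof.
move=> hsz hms hsum a ha; rewrite /tlet.
have Hlt : (val a).-1 < size (tseq ms ks).
  by rewrite size_tseq // hsum; have := ltn_ord a; move: ha; rewrite /=; lia.
exact: allP hms _ (mem_tseq (mem_nth 0 Hlt)).
Qed.

Theorem lemma3p3 (n : nat) (ms ks : seq nat) :
  3 <= n ->
  size ms = size ks ->
  uniq ms ->
  all (fun m => odd m && (3 <= m)) ms ->
  all (fun k => 0 < k) ks ->
  sumn ks = n - 1 ->
  forall theta0 : seq 'I_n -> seq 'I_n,
    is_aut (tseq ms ks) theta0 ->
    (inC (tseq ms ks) theta0 <->
     forall a : 'I_n, 0 < val a -> stabilizes (tseq ms ks) a theta0).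
Proof.
move=> hn hsz _ hms _ hsum f [Hf [g [Hg [Hgf _]]]]; split.
  by case/inC_stabilizes_all.
move=> Hstab; pose b0 : 'I_n := Ordinal (ltnW (ltnW hn)).
exact: (stabilizing_in_C (b0 := b0) erefl (tlet_odd_ge3 hsz hms hsum) Hf Hg Hgf Hstab hn).
Qed.
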